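(* Let $\mathcal{A}=\{A_1,\dots,A_m\}$ be a bimodal collection of pairwise disjoint subsets of a finite abelian group $G$. Suppose that for some $i$ the set $A_i$ is a coset of its internal difference group $H_i$. Let $A_i^1,\dots,A_i^r$ be pairwise disjoint subsets whose union is $A_i$, with internal difference groups $H_i^1,\dots,H_i^r$ respectively, such that for each $j=1,\dots,r$ the set $A_i^j$ is a coset of $H_i^j$. Then the collection $\{A_1,\dots,A_{i-1},A_i^1,\dots,A_i^r,A_{i+1},\dots,A_m\}$ has the bimodal property.
   Context: $G$ is a finite abelian group written additively. The internal difference group of a subset $S\subseteq G$ is the subgroup of $G$ generated by all elements $x-y$ with $x,y\in S$. A collection $\{A_1,\dots,A_m\}$ of pairwise disjoint subsets of $G$ is bimodal (has the bimodal property) if for every $i$ and every $\delta\in G\setminus\{0\}$, the number $N_i(\delta)$ of pairs $(a,b)$ with $a\in A_i$, $b\in A_j$ for some $j\neq i$, and $a-b=\delta$, satisfies $N_i(\delta)\in\{0,|A_i|\}$. *)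

From mathcomp Require Import all_boot all_order all_algebra.
Set Implicit Arguments. Unset Strict Implicit. Unset Printing Implicit Defensive.
Import GRing.Theory.
Local Open Scope ring_scope.

Definition is_subgroup (G : finZmodType) (H : {set G}) : bool :=
  (0 \in H) && [forall x in H, forall y in H, x - y \in H].

Definition diffs (G : finZmodType) (S : {set G}) : {set G} :=
  [set x - y | x in S, y in S].

Definition diff_group (G : finZmodType) (S : {set G}) : {set G} :=
  [set z | [forall H : {set G}, (is_subgroup H && (diffs S \subset H)) ==> (z \in H)]].

Definition is_coset (G : finZmodType) (S H : {set G}) : Prop :=
  exists g : G, S = [set g + h | h in H].

Definition pairwise_disjoint (G : finZmodType) (I : finType) (A : I -> {set G}) : Prop :=
  forall i j : I, i != j -> [disjoint A i & A j].

Definition Ncount (G : finZmodType) (I : finType) (A : I -> {set G}) (i : I) (d : G) : nat :=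
  #|[set ab : G * G | [&& ab.1 \in A i,
                          [exists j : I, (j != i) && (ab.2 \in A j)] &
                          ab.1 - ab.2 == d]]|.

Definition bimodal (G : finZmodType) (I : finType) (A : I -> {set G}) : Prop :=
  pairwise_disjoint A /\
  forall (i : I) (d : G), d != 0 -> Ncount A i d = 0%N \/ Ncount A i d = #|A i|.

Definition refine_coll (G : finZmodType) (m : nat) (A : 'I_m -> {set G}) (i0 : 'I_m)
    (r : nat) (B : 'I_r -> {set G}) : ({j : 'I_m | j != i0} + 'I_r)%type -> {set G} :=
  fun k => match k with inl j => A (val j) | inr l => B l end.
Arguments refine_coll {G m} A i0 {r} B _.

From mathcomp Require Import all_boot all_order all_algebra.
Set Implicit Arguments. Unset Strict Implicit. Unset Printing Implicit Defensive.
Import GRing.Theory.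
Local Open Scope ring_scope.

(* Write [a ~ d] when [a - d] lies in a block other than the one of [a]; then
   [N_i(d)] counts the [a ~ d] in [A_i], and bimodality says that for [d != 0]
   either no or every element of a block is [~ d].  Since a coset [S] of [H]
   satisfies [a - d \in S <-> d \in H] for [a \in S], this relation is easy to
   follow through the refinement.  Old blocks see the same outside set, because
   the pieces [B_l] cover [A_i] exactly.  For [a] in a piece [B_l]: if [d \in H_l]
   then [a - d] stays in [B_l], so no [a] is [~ d]; if [d \in H_i] but not in
   [H_l], then [a - d] is in [A_i] but not in [B_l], so every [a] is [~ d];
   otherwise [a - d] leaves [A_i], and [a ~ d] holds exactly when it did in the
   original collection, where bimodality of [A] applies to all of [A_i]. *)

Section Partners.

Variables (G : finZmodType) (I : finType) (C : I -> {set G}).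

Definition outside (k : I) : {set G} := \bigcup_(j | j != k) C j.

Definition partners (k : I) (d : G) : {set G} :=
  [set a in C k | a - d \in outside k].

Lemma in_partners k d a :
  (a \in partners k d) = (a \in C k) && (a - d \in outside k).
Proof. by rewrite inE. Qed.

Lemma Ncount_partners k d : Ncount C k d = #|partners k d|.
Proof.
rewrite /Ncount -(card_imset _ (f := fun a : G => (a, a - d))); last by move=> x y [].
apply: eq_card => -[x y]; rewrite inE /=.
apply/idP/imsetP.
- case/and3P=> hx /existsP[j /andP[hj hy]] /eqP <-.
  exists x; last by rewrite subKr.
  by rewrite in_partners hx subKr; apply/bigcupP; exists j.
- case=> a; rewrite in_partners => /andP[ha /bigcupP[j hj ho]] [-> ->].
  by rewrite ha subKr eqxx andbT; apply/existsP; exists j; rewrite hj.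
Qed.

Lemma disjoint_outside k : pairwise_disjoint C -> [disjoint C k & outside k].
Proof.
move=> dC; rewrite -setI_eq0 big_distrr /=; apply/eqP/big1 => j hj.
by apply/eqP; rewrite setI_eq0; apply: dC; rewrite eq_sym.
Qed.

Lemma bimodal_partnersP :
  bimodal C <->
  pairwise_disjoint C /\
  forall k d, d != 0 -> partners k d = set0 \/ partners k d = C k.
Proof.
have sub k d : partners k d \subset C k by apply/subsetP => a; rewrite inE => /andP[].
split=> -[dC bC]; split=> // k d hd; case: (bC k d hd); rewrite ?Ncount_partners.
- by move/cards0_eq; left.
- by move=> h; right; apply/eqP; rewrite eqEcard sub h leqnn.
- by move->; left; rewrite cards0.
- by move->; right.
Qed.

End Partners.

Lemma diff_group_subr (G : finZmodType) (S : {set G}) :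
  {in diff_group S &, forall z w, z - w \in diff_group S}.
Proof.
move=> z w; rewrite !inE => /forallP Hz /forallP Hw; apply/forallP => H.
apply/implyP => HH; have := implyP (Hz H) HH; have := implyP (Hw H) HH.
by case/andP: HH => /andP[_ /forall_inP Hs] _ hw /Hs/forall_inP; apply.
Qed.

Lemma coset_memBr (G : finZmodType) (S K : {set G}) a d :
  {in K &, forall x y, x - y \in K} -> is_coset S K -> a \in S ->
  (a - d \in S) = (d \in K).
Proof.
move=> subK [g ->] /imsetP[h hh ->]; apply/imsetP/idP.
- case=> h' hh'; rewrite -addrA => /addrI e.
  by rewrite -[d](subKr h) e; apply: subK.
- by move=> hd; exists (h - d); rewrite ?addrA //; apply: subK.
Qed.

Lemma diff_coset_memBr (G : finZmodType) (S : {set G}) a d :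
  is_coset S (diff_group S) -> a \in S -> (a - d \in S) = (d \in diff_group S).
Proof. exact/coset_memBr/diff_group_subr. Qed.

Section Refinement.

Variables (G : finZmodType) (m : nat) (A : 'I_m -> {set G}) (i : 'I_m).
Variables (r : nat) (B : 'I_r -> {set G}).
Hypothesis dA : pairwise_disjoint A.
Hypothesis dB : pairwise_disjoint B.
Hypothesis coverB : \bigcup_(l < r) B l = A i.

Let C := refine_coll A i B.

Lemma refine_piece_sub l : B l \subset A i.
Proof. by rewrite -coverB; apply: (bigcup_sup l). Qed.

Lemma outside_piece_sub l : outside B l \subset A i.
Proof. by rewrite -coverB; apply/bigcupsP => l' _; apply: (bigcup_sup l'). Qed.

Lemma refine_disjoint : pairwise_disjoint C.
Proof.
move=> [j1|l1] [j2|l2] hne /=.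
- by apply: dA; apply: contraNneq hne => /val_inj ->.
- exact: disjointWr (refine_piece_sub l2) (dA (valP j1)).
- by rewrite disjoint_sym; apply: disjointWr (refine_piece_sub l1) (dA (valP j2)).
- by apply: dB; apply: contraNneq hne => ->.
Qed.

Lemma outside_refine_old (j : {j : 'I_m | j != i}) :
  outside C (inl j) = outside A (val j).
Proof.
apply/setP => x; apply/bigcupP/bigcupP.
- case=> -[j'|l] hne hx /=.
    by exists (val j') => //; apply: contraNneq hne => /val_inj ->.
  by exists i; rewrite 1?eq_sym ?(valP j) // (subsetP (refine_piece_sub l)).
- case=> k hk hx; have [ek|nk] := eqVneq k i.
    by move: hx; rewrite ek -coverB => /bigcupP[l _ hl]; exists (inr l).
  by exists (inl (exist _ k nk)) => //; apply: contraNneq hk => -[<-].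
Qed.

Lemma outside_refine_new l : outside C (inr l) = outside A i :|: outside B l.
Proof.
apply/setP => x; rewrite inE; apply/bigcupP/orP.
- case=> -[j|l'] hne hx; [left | right]; apply/bigcupP.
    by exists (val j); rewrite ?(valP j).
  by exists l' => //; apply: contraNneq hne => ->.
- case=> /bigcupP[k hk hx].
    by exists (inl (exist _ k hk)).
  by exists (inr k) => //; apply: contraNneq hk => -[].
Qed.

Lemma refine_partners_old j d : partners C (inl j) d = partners A (val j) d.
Proof. by apply/setP => a; rewrite !in_partners outside_refine_old. Qed.

Section Piece.

Variables (l : 'I_r) (d : G).
Hypothesis cB : is_coset (B l) (diff_group (B l)).

Lemma refine_partners_piece_set0 :
  d \in diff_group (B l) -> partners C (inr l) d = set0.
Proof.
move=> hd; apply/setP => a; rewrite !in_partners outside_refine_new !inE /=.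
apply/negbTE/negP => /andP[ha hx].
have hb : a - d \in B l by rewrite diff_coset_memBr.
case/orP: hx => hx.
- have hbA := subsetP (refine_piece_sub l) _ hb.
  by rewrite (disjointFr (disjoint_outside i dA) hbA) in hx.
- by rewrite (disjointFr (disjoint_outside l dB) hb) in hx.
Qed.

Hypothesis cAi : is_coset (A i) (diff_group (A i)).

Lemma refine_partners_piece_full :
  d \notin diff_group (B l) -> d \in diff_group (A i) -> partners C (inr l) d = B l.
Proof.
move=> hdB hdA; apply/setP => a; rewrite !in_partners outside_refine_new !inE /=.
apply/andb_idr => ha; apply/orP; right.
have := diff_coset_memBr d cAi (subsetP (refine_piece_sub l) _ ha).
rewrite hdA -coverB => /bigcupP[l' _ hl']; apply/bigcupP; exists l' => //.
by apply: contraNneq hdB => el; rewrite -(diff_coset_memBr _ cB ha) -el.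
Qed.

Lemma refine_partners_piece_outside :
  d \notin diff_group (A i) -> partners C (inr l) d = B l :&: partners A i d.
Proof.
move=> hdA; apply/setP => a; rewrite !in_partners outside_refine_new !inE /=.
case ha: (a \in B l) => //=; have haA := subsetP (refine_piece_sub l) _ ha.
have hx : a - d \notin A i by rewrite diff_coset_memBr.
by rewrite haA (contraNF (subsetP (outside_piece_sub l) _) hx) orbF.
Qed.

End Piece.

End Refinement.

Theorem theorem2p12 (G : finZmodType) (m : nat) (A : 'I_m -> {set G}) (i : 'I_m)
    (r : nat) (B : 'I_r -> {set G}) :
  bimodal A ->
  is_coset (A i) (diff_group (A i)) ->
  pairwise_disjoint B ->
  (\bigcup_(j < r) B j) = A i ->
  (forall j : 'I_r, is_coset (B j) (diff_group (B j))) ->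
  bimodal (refine_coll A i B).
Proof.
move=> /bimodal_partnersP[dA bA] cAi dB coverB cB.
apply/bimodal_partnersP; split; first exact: refine_disjoint.
move=> [j|l] d hd; first by rewrite refine_partners_old //; apply: bA.
have [hdB|hdB] := boolP (d \in diff_group (B l)).
  by left; apply: refine_partners_piece_set0.
have [hdA|hdA] := boolP (d \in diff_group (A i)).
  by right; apply: refine_partners_piece_full.
rewrite refine_partners_piece_outside //.
case: (bA i d hd) => ->; first by left; rewrite setI0.
by right; apply/setIidPl/refine_piece_sub.
Qed.
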